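(* Let $\mathbb{E}$ be a finite-dimensional Euclidean space, $\mathcal{K}\subseteq\mathbb{E}$ a closed convex cone, $\mathcal{A}:\mathbb{E}\to\mathbb{R}^m$ a surjective linear map and $b\in\mathbb{R}^m$, and let $\mathcal{F}=\{x\in\mathcal{K}:\mathcal{A}x=b\}\neq\emptyset$. Let $\bar x$ be an extreme point of $\mathcal{F}$. Then $\dim\operatorname{face}(\bar x,\mathcal{K})\le m-\operatorname{ips}(\mathcal{F})$.
   Context: $\operatorname{face}(\bar x,\mathcal{K})$ is the minimal face of $\mathcal{K}$ containing $\bar x$. Strict feasibility of $\{x\in C:\mathcal{A}x=b\}$ with respect to a closed convex cone $C$ means that this set contains a point of $\operatorname{relint}(C)$. For a cone $C$, $C^*$ is its dual cone and $C^\perp$ its orthogonal complement. Facial reduction process: set $\mathcal{K}^0=\mathcal{K}$, $k=0$; while strict feasibility fails for $\{x\in\mathcal{K}^k:\mathcal{A}x=b\}$ with respect to $\mathcal{K}^k$, increase $k$ by one, choose $y^k\in\mathbb{R}^m$ with $\mathcal{A}^*y^k\in(\mathcal{K}^{k-1})^*\setminus(\mathcal{K}^{k-1})^\perp$ and $\langle b,y^k\rangle=0$, and set $\mathcal{K}^k=\mathcal{K}^{k-1}\cap(\mathcal{A}^*y^k)^\perp$. Let $\bar{\mathcal{K}}=\mathcal{K}\cap(\mathcal{A}^*y^1)^\perp\cap\cdots\cap(\mathcal{A}^*y^k)^\perp$ be the cone at termination. The implicit problem singularity $\operatorname{ips}(\mathcal{F})$ is the number of redundant equalities in the system $\{x\in\bar{\mathcal{K}}:\mathcal{A}x=b\}$,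 i.e. $m$ minus the rank of $\mathcal{A}$ restricted to $\operatorname{span}\bar{\mathcal{K}}$. *)

From mathcomp Require Import all_boot all_algebra.
From mathcomp Require Import boolp classical_sets reals.
Set Implicit Arguments. Unset Strict Implicit. Unset Printing Implicit Defensive.
Import GRing.Theory Num.Theory.
Local Open Scope ring_scope.
Local Open Scope classical_set_scope.

Section Defs.
Variable R : realType.

(* The Euclidean space E is modelled as R^n (column vectors) with the
   standard inner product. *)
Definition dot (p : nat) (u v : 'cV[R]_p) : R := (u^T *m v) 0 0.
Definition enorm (p : nat) (u : 'cV[R]_p) : R := Num.sqrt (dot u u).

Definition eclosed (n : nat) (C : set 'cV[R]_n) : Prop :=
  forall x, (forall e : R, 0 < e -> exists z, C z /\ enorm (z - x) < e) -> C x.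

Definition convex_set (n : nat) (C : set 'cV[R]_n) : Prop :=
  forall x y (t : R), C x -> C y -> 0 <= t <= 1 -> C (t *: x + (1 - t) *: y).

Definition is_cone (n : nat) (C : set 'cV[R]_n) : Prop :=
  forall x (t : R), C x -> 0 <= t -> C (t *: x).

Definition closed_convex_cone (n : nat) (C : set 'cV[R]_n) : Prop :=
  eclosed C /\ convex_set C /\ is_cone C.

Definition span (n : nat) (S : set 'cV[R]_n) : set 'cV[R]_n :=
  [set z | exists k (M : 'M[R]_(n, k)),
      (forall j, S (col j M)) /\ exists c : 'cV[R]_k, z = M *m c].

Definition dimS (n : nat) (S : set 'cV[R]_n) : nat :=
  \max_(d < n.+1 | `[< exists M : 'M[R]_(n, d),
                        \rank M = d /\ forall j, S (col j M) >]) d.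

Definition is_face (n : nat) (K Fc : set 'cV[R]_n) : Prop :=
  Fc `<=` K /\ convex_set Fc /\
  forall x y (t : R), K x -> K y -> 0 < t < 1 ->
    Fc (t *: x + (1 - t) *: y) -> Fc x /\ Fc y.

(* face(xbar, K): minimal face of K containing xbar (intersection of all
   faces of K containing xbar) *)
Definition minface (n : nat) (K : set 'cV[R]_n) (xbar : 'cV[R]_n) : set 'cV[R]_n :=
  [set z | forall Fc, is_face K Fc -> Fc xbar -> Fc z].

Definition extreme_point (n : nat) (Fs : set 'cV[R]_n) (xbar : 'cV[R]_n) : Prop :=
  Fs xbar /\ forall x y (t : R), Fs x -> Fs y -> 0 < t < 1 ->
    xbar = t *: x + (1 - t) *: y -> x = y.

(* relative interior of a convex cone C (its affine hull is its span) *)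
Definition relint (n : nat) (C : set 'cV[R]_n) : set 'cV[R]_n :=
  [set x | C x /\ exists e : R, 0 < e /\
     forall z, span C z -> enorm (z - x) < e -> C z].

Definition feasible_set (m n : nat) (C : set 'cV[R]_n) (A : 'M[R]_(m, n))
  (b : 'cV[R]_m) : set 'cV[R]_n := [set x | C x /\ A *m x = b].

Definition strictly_feasible (m n : nat) (C : set 'cV[R]_n) (A : 'M[R]_(m, n))
  (b : 'cV[R]_m) : Prop := exists x, relint C x /\ A *m x = b.

Definition dual_cone (n : nat) (C : set 'cV[R]_n) : set 'cV[R]_n :=
  [set y | forall x, C x -> 0 <= dot x y].

Definition orth (n : nat) (C : set 'cV[R]_n) : set 'cV[R]_n :=
  [set y | forall x, C x -> dot x y = 0].

(* K^j = K ∩ (A^* y^1)^⊥ ∩ ... ∩ (A^* y^j)^⊥, with y^(i+1) = nth 0 ys i *)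
Definition FR_cone (m n : nat) (K : set 'cV[R]_n) (A : 'M[R]_(m, n))
  (ys : seq 'cV[R]_m) (j : nat) : set 'cV[R]_n :=
  [set x | K x /\ forall i, (i < j)%N -> dot (A^T *m nth 0 ys i) x = 0].

(* ys = [y^1; ...; y^k] is a run of the facial reduction process,
   terminated (the last cone gives strict feasibility). *)
Definition FR_run (m n : nat) (K : set 'cV[R]_n) (A : 'M[R]_(m, n))
  (b : 'cV[R]_m) (ys : seq 'cV[R]_m) : Prop :=
  (forall i, (i < size ys)%N ->
     ~ strictly_feasible (FR_cone K A ys i) A b /\
     dual_cone (FR_cone K A ys i) (A^T *m nth 0 ys i) /\
     ~ orth (FR_cone K A ys i) (A^T *m nth 0 ys i) /\
     dot b (nth 0 ys i) = 0) /\
  strictly_feasible (FR_cone K A ys (size ys)) A b.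

Definition ips (m n : nat) (K : set 'cV[R]_n) (A : 'M[R]_(m, n))
  (ys : seq 'cV[R]_m) : nat :=
  (m - dimS [set A *m x | x in span (FR_cone K A ys (size ys))])%N.

End Defs.

(* The last cone Kbar of facial reduction is a face of K: each step intersects
   the current face with the hyperplane orthogonal to A^T y, an element of its
   dual cone.  Since A xbar = b and <b, y> = 0, xbar lies in Kbar, hence
   face(xbar, K) is contained in Kbar, and m - ips is the dimension of
   A (span Kbar).  On the other hand, every direction d in the span of
   face(xbar, K) can be followed both ways from xbar inside K; if moreover
   A d = 0 then xbar is the midpoint of two feasible points xbar +- e d, so
   d = 0 by extremality.  Thus A is injective on span face(xbar, K) and maps
   it into A (span Kbar), which gives the dimension bound. *)

From Pilot Require Import Defs.
From mathcomp Require Import all_boot all_algebra.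
From mathcomp Require Import boolp classical_sets reals.
From mathcomp Require Import all_order ring lra.
Local Open Scope ring_scope.
Local Open Scope classical_set_scope.
Set Implicit Arguments.
Unset Strict Implicit.
Unset Printing Implicit Defensive.
Import Order.TTheory GRing.Theory Num.Theory.

Section LinearAlgebra.
Variable R : realType.

Lemma dotC (p : nat) (u v : 'cV[R]_p) : dot u v = dot v u.
Proof. by rewrite /dot -[v^T *m u]trmxK trmx_mul !trmxK [RHS]mxE. Qed.

Lemma dotDZr (p : nat) (a x y : 'cV[R]_p) (s r : R) :
  dot a (s *: x + r *: y) = s * dot a x + r * dot a y.
Proof. by rewrite /dot mulmxDr -!scalemxAr !mxE. Qed.

Lemma dot_trmx (m n : nat) (A : 'M[R]_(m, n)) (y : 'cV[R]_m) (x : 'cV[R]_n) :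
  dot (A^T *m y) x = dot y (A *m x).
Proof. by rewrite /dot trmx_mul trmxK mulmxA. Qed.

Lemma mxrank_col_freeP (m d : nat) (N : 'M[R]_(m, d)) :
  (forall c : 'cV[R]_d, N *m c = 0 -> c = 0) <-> \rank N = d.
Proof.
split=> [Ninj | rkN c Nc0].
  rewrite -mxrank_tr; apply/eqP; apply: inj_row_free => v vN0.
  apply: trmx_inj; rewrite trmx0; apply: Ninj.
  by rewrite -[N]trmxK -trmx_mul vN0 trmx0.
have NTfree : row_free N^T by rewrite /row_free mxrank_tr rkN.
apply: trmx_inj; apply/eqP; rewrite trmx0 -(mulmx_free_eq0 _ NTfree).
by rewrite -trmx_mul Nc0 trmx0.
Qed.

End LinearAlgebra.

Section SpanDimension.
Variables (R : realType) (n : nat).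
Implicit Types S : set 'cV[R]_n.

Lemma sub_span S : S `<=` Defs.span S.
Proof.
move=> x Sx; exists 1%N, x; split; last by exists 1%:M; rewrite mulmx1.
move=> j; rewrite (_ : col j x = x) //.
by apply/matrixP => i k; rewrite mxE !ord1.
Qed.

Lemma span_ind S (P : 'cV[R]_n -> Prop) :
  P 0 -> (forall u v, P u -> P v -> P (u + v)) ->
  (forall c u, P u -> P (c *: u)) -> S `<=` P -> Defs.span S `<=` P.
Proof.
move=> P0 PD PZ SP _ [k [M [SM [c ->]]]].
rewrite (_ : M *m c = \sum_(j < k) c j 0 *: col j M).
  by apply: (big_ind P P0 PD) => j _; apply/PZ/SP.
apply/matrixP => i l; rewrite !mxE summxE; apply: eq_bigr => j _.
by rewrite !mxE (ord1 l) mulrC.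
Qed.

Lemma dimS_le S : (dimS S <= n)%N.
Proof. by apply/bigmax_leqP => d _; rewrite -ltnS. Qed.

Lemma dimS_le_mul (m : nat) (A : 'M[R]_(m, n)) S (T : set 'cV[R]_m) :
  (forall z, Defs.span S z -> A *m z = 0 -> z = 0) ->
  (forall x, S x -> T (A *m x)) -> (dimS S <= dimS T)%N.
Proof.
move=> Ainj ST; apply/bigmax_leqP => d /asboolP [M [rkM SM]].
have rkAM : \rank (A *m M) = d.
  apply/mxrank_col_freeP => c; rewrite -mulmxA => /Ainj AMc0.
  apply: (mxrank_col_freeP M).2 rkM _ (AMc0 _).
  by exists d, M; split => //; exists c.
have ltdm : (d < m.+1)%N by rewrite ltnS -rkAM rank_leq_row.
apply: (leq_trans _ (leq_bigmax_cond (Ordinal ltdm) _)) => //.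
apply/asboolP; exists (A *m M); split=> // j.
by rewrite colE -mulmxA -colE; apply/ST/SM.
Qed.

End SpanDimension.

Section Faces.
Variables (R : realType) (n : nat) (K : set 'cV[R]_n).

Lemma is_face_refl : convex_set K -> is_face K K.
Proof. by move=> Kcvx; split=> // x y t Kx Ky _ _. Qed.

Lemma is_face_cap_orth (F : set 'cV[R]_n) (s : 'cV[R]_n) :
  is_face K F -> dual_cone F s -> is_face K [set x | F x /\ dot s x = 0].
Proof.
move=> [FK [Fcvx Fface]] Fs; split; first by move=> x [/FK].
split=> [x y t [Fx sx0] [Fy sy0] t01 | x y t Kx Ky t01 [Fxy sxy0]].
  by split; [exact: Fcvx | rewrite dotDZr sx0 sy0 !mulr0 addr0].
have [Fx Fy] := Fface _ _ _ Kx Ky t01 Fxy.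
have sx_ge0 : 0 <= dot s x by rewrite dotC; apply: Fs.
have sy_ge0 : 0 <= dot s y by rewrite dotC; apply: Fs.
move: t01 sxy0 => /andP[t_gt0 t_lt1]; rewrite dotDZr => sxy0.
by split; split=> //; nra.
Qed.

End Faces.

Section FacialReduction.
Variables (R : realType) (m n : nat) (K : set 'cV[R]_n).
Variables (A : 'M[R]_(m, n)) (b : 'cV[R]_m) (ys : seq 'cV[R]_m).

Lemma FR_cone0 : FR_cone K A ys 0 = K.
Proof. by apply/seteqP; split=> [x [] | x Kx] //; split. Qed.

Lemma FR_coneS j : FR_cone K A ys j.+1 =
  [set x | FR_cone K A ys j x /\ dot (A^T *m nth 0 ys j) x = 0].
Proof.
apply/seteqP; split=> [x [Kx orth_x] | x [[Kx orth_x] orth_jx]].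
  by split; [split=> // i /ltnW/orth_x | apply: orth_x].
by split=> // i; rewrite ltnS leq_eqVlt => /orP[/eqP-> // | /orth_x].
Qed.

Lemma FR_cone_face j : convex_set K ->
  (forall i, (i < j)%N -> dual_cone (FR_cone K A ys i) (A^T *m nth 0 ys i)) ->
  is_face K (FR_cone K A ys j).
Proof.
move=> Kcvx; elim: j => [|j IHj] dual_ys.
  by rewrite FR_cone0; exact: is_face_refl.
rewrite FR_coneS; apply: is_face_cap_orth; last exact: dual_ys.
by apply: IHj => i /ltnW; apply: dual_ys.
Qed.

Lemma FR_cone_feasible j x : (forall i, (i < j)%N -> dot b (nth 0 ys i) = 0) ->
  feasible_set K A b x -> FR_cone K A ys j x.
Proof.
by move=> b_orth [Kx Axb]; split=> // i /b_orth; rewrite dot_trmx Axb dotC.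
Qed.

End FacialReduction.

Section TwoSidedDirections.
Variables (R : realType) (n : nat) (K : set 'cV[R]_n).
Hypotheses (Kcvx : convex_set K) (Kcone : is_cone K).

Lemma conic_comb x y (a c : R) :
  K x -> K y -> 0 <= a -> 0 <= c -> K (a *: x + c *: y).
Proof.
move=> Kx Ky a_ge0 c_ge0; have [ac0 | ac_neq0] := eqVneq (a + c) 0.
  have [-> ->] : a = 0 /\ c = 0 by split; lra.
  by rewrite !scale0r addr0 -(scale0r x); apply: Kcone.
have ac_gt0 : 0 < a + c by rewrite lt_neqAle eq_sym ac_neq0 addr_ge0.
have -> : a *: x + c *: y =
    (a + c) *: ((a / (a + c)) *: x + (1 - a / (a + c)) *: y).
  by apply/matrixP => i j; rewrite !mxE; field.
apply: Kcone (ltW ac_gt0); apply: Kcvx => //.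
by rewrite divr_ge0 ?addr_ge0 //= ler_pdivrMr // mul1r lerDl.
Qed.

Variable xbar : 'cV[R]_n.
Hypothesis Kxbar : K xbar.

Lemma cone_segment v (s : R) : K (xbar + v) -> 0 <= s <= 1 -> K (xbar + s *: v).
Proof.
move=> Kxv /andP[s_ge0 s_le1].
have -> : xbar + s *: v = (1 - s) *: xbar + s *: (xbar + v).
  by apply/matrixP => i j; rewrite !mxE; ring.
by apply: conic_comb => //; lra.
Qed.

(* This is face(xbar, K) itself, but only its being a face containing xbar is
   needed. *)
Definition face_at (z : 'cV[R]_n) : Prop :=
  K z /\ exists e : R, 0 < e /\ K (xbar - e *: z).

Definition two_sided_dir (d : 'cV[R]_n) : Prop :=
  exists e : R, 0 < e /\ forall s, `|s| <= e -> K (xbar + s *: d).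

Lemma face_at_shrink z e e' : K (xbar - e *: z) -> 0 < e' <= e ->
  K (xbar - e' *: z).
Proof.
move=> Kxz /andP[e'_gt0 e'_le]; have e_gt0 := lt_le_trans e'_gt0 e'_le.
have -> : xbar - e' *: z = xbar + (e' / e) *: (- (e *: z)).
  by apply/matrixP => i j; rewrite !mxE; field; rewrite gt_eqF.
apply: cone_segment => //.
by rewrite divr_ge0 ?(ltW e_gt0) ?(ltW e'_gt0) //= ler_pdivrMr // mul1r.
Qed.

Lemma face_at_xbar : face_at xbar.
Proof.
split=> //; exists (1/2); split; first lra.
have -> : xbar - 1/2 *: xbar = 1/2 *: xbar.
  by apply/matrixP => i j; rewrite !mxE; field.
by apply: Kcone => //; lra.
Qed.

Lemma face_at_face : is_face K face_at.
Proof.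
split; first by move=> z [].
split=> [z1 z2 t [Kz1 [e1 [e1_gt0 Kz1']]] [Kz2 [e2 [e2_gt0 Kz2']]] t01 |].
  split; first exact: Kcvx.
  set e := Num.min e1 e2; have e_gt0 : 0 < e by rewrite lt_min e1_gt0 e2_gt0.
  exists e; split=> //.
  have Kxz1 : K (xbar - e *: z1).
    by apply: face_at_shrink Kz1' _; rewrite e_gt0 ge_min lexx.
  have Kxz2 : K (xbar - e *: z2).
    by apply: face_at_shrink Kz2' _; rewrite e_gt0 ge_min lexx orbT.
  have -> : xbar - e *: (t *: z1 + (1 - t) *: z2) =
      t *: (xbar - e *: z1) + (1 - t) *: (xbar - e *: z2).
    by apply/matrixP => i j; rewrite !mxE; ring.
  exact: Kcvx.
move=> x y t Kx Ky /andP[t_gt0 t_lt1] [_ [e [e_gt0 Kxy]]].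
split; split=> //.
  exists (e * t); split; first exact: mulr_gt0.
  have -> : xbar - (e * t) *: x =
      1 *: (xbar - e *: (t *: x + (1 - t) *: y)) + (e * (1 - t)) *: y.
    by apply/matrixP => i j; rewrite !mxE; ring.
  by apply: conic_comb => //; nra.
exists (e * (1 - t)); split; first by apply: mulr_gt0; lra.
have -> : xbar - (e * (1 - t)) *: y =
    1 *: (xbar - e *: (t *: x + (1 - t) *: y)) + (e * t) *: x.
  by apply/matrixP => i j; rewrite !mxE; ring.
by apply: conic_comb => //; nra.
Qed.

Lemma face_at_two_sided z : face_at z -> two_sided_dir z.
Proof.
move=> [Kz [e [e_gt0 Kxz]]]; exists e; split=> // s s_le.
have [s_ge0 | s_lt0] := leP 0 s.
  by rewrite -[xbar]scale1r; apply: conic_comb.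
rewrite ltr0_norm // in s_le.
have -> : xbar + s *: z = (1 + s / e) *: xbar + (- s / e) *: (xbar - e *: z).
  by apply/matrixP => i j; rewrite !mxE; field; rewrite gt_eqF.
apply: conic_comb => //; last by rewrite divr_ge0 ?(ltW e_gt0) // oppr_ge0 ltW.
have : - s / e <= 1 by rewrite ler_pdivrMr // mul1r.
by rewrite mulNr; lra.
Qed.

Lemma two_sided_dir0 : two_sided_dir 0.
Proof. by exists 1; split=> // s _; rewrite scaler0 addr0. Qed.

Lemma two_sided_dirD d1 d2 :
  two_sided_dir d1 -> two_sided_dir d2 -> two_sided_dir (d1 + d2).
Proof.
move=> [e1 [e1_gt0 Kd1]] [e2 [e2_gt0 Kd2]].
set e := Num.min e1 e2; have e_gt0 : 0 < e by rewrite lt_min e1_gt0 e2_gt0.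
exists (e / 2); split=> [|s s_le]; first exact: divr_gt0.
have s2_le : `|2 * s| <= e by rewrite normrM ger0_norm //; lra.
have -> : xbar + s *: (d1 + d2) =
    1/2 *: (xbar + (2 * s) *: d1) + (1 - 1/2) *: (xbar + (2 * s) *: d2).
  by apply/matrixP => i j; rewrite !mxE; field.
apply: Kcvx; [apply: Kd1 | apply: Kd2 | lra].
  by rewrite (le_trans s2_le) // ge_min lexx.
by rewrite (le_trans s2_le) // ge_min lexx orbT.
Qed.

Lemma two_sided_dirZ c d : two_sided_dir d -> two_sided_dir (c *: d).
Proof.
move=> [e [e_gt0 Kd]]; have c1_gt0 : 0 < `|c| + 1 by rewrite ltr_wpDl.
exists (e / (`|c| + 1)); split=> [|s s_le]; first exact: divr_gt0.
rewrite scalerA; apply: Kd; rewrite normrM.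
rewrite ler_pdivlMr // in s_le.
by have := normr_ge0 s; nra.
Qed.

Lemma span_minface_two_sided : Defs.span (minface K xbar) `<=` two_sided_dir.
Proof.
apply: span_ind two_sided_dir0 two_sided_dirD two_sided_dirZ _ => z minz.
exact: face_at_two_sided (minz _ face_at_face face_at_xbar).
Qed.

Lemma extreme_two_sided_dir (m : nat) (A : 'M[R]_(m, n)) (b : 'cV[R]_m) d :
  extreme_point (feasible_set K A b) xbar -> two_sided_dir d -> A *m d = 0 ->
  d = 0.
Proof.
move=> [[_ Axb] xbar_ext] [e [e_gt0 Kd]] Ad0.
have feas s : `|s| <= e -> feasible_set K A b (xbar + s *: d).
  move=> s_le; split; first exact: Kd.
  by rewrite mulmxDr -scalemxAr Ad0 scaler0 addr0 Axb.
have e_le : `|e| <= e by rewrite ger0_norm ?(ltW e_gt0).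
have : xbar + e *: d = xbar + (- e) *: d.
  apply: (xbar_ext _ _ (1/2) (feas e _) (feas (- e) _)); rewrite ?normrN //.
    lra.
  by apply/matrixP => i j; rewrite !mxE; field.
move/addrI/eqP; rewrite -subr_eq0 -scalerBl scaler_eq0 opprK => /orP[|/eqP //].
by rewrite gt_eqF ?addr_gt0.
Qed.

End TwoSidedDirections.

Theorem theorem4p4 (R : realType) (m n : nat) (K : set 'cV[R]_n)
  (A : 'M[R]_(m, n)) (b : 'cV[R]_m) :
  closed_convex_cone K ->
  \rank A = m ->
  feasible_set K A b !=set0 ->
  forall xbar : 'cV[R]_n, extreme_point (feasible_set K A b) xbar ->
  forall ys : seq 'cV[R]_m, FR_run K A b ys ->
  (dimS (minface K xbar) <= m - ips K A ys)%N.
Proof.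
move=> [_ [Kcvx Kcone]] _ _ xbar xbar_ext ys [run _].
have [[Kxbar _] _] := xbar_ext.
set Kbar := FR_cone K A ys (size ys).
have Kbar_face : is_face K Kbar by apply: FR_cone_face => // i /run[_ []].
have Kbar_xbar : Kbar xbar.
  by apply: FR_cone_feasible xbar_ext.1 => i /run[_ [_ []]].
have A_inj : forall z, Defs.span (minface K xbar) z -> A *m z = 0 -> z = 0.
  move=> z /(span_minface_two_sided Kcvx Kcone Kxbar).
  exact: extreme_two_sided_dir xbar_ext.
rewrite /ips subKn ?dimS_le //; apply: dimS_le_mul A_inj _ => x minx.
by exists x => //; apply: sub_span; apply: minx.
Qed.
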